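(* Let $\mu_1(\xi)$ denote the second eigenvalue of the operator $-\frac{d^2}{dt^2}+(\xi+t)^2$ in $L_2(\mathbb{R}_+)$ with Neumann boundary condition at $t=0$, and $\Theta_1:=\inf_{\xi\in\mathbb{R}}\mu_1(\xi)$. Then $\Theta_1>1$. *)

From Stdlib Require Import Reals.
From Coquelicot Require Import Coquelicot.
Open Scope R_scope.

Definition deGennes_eigenpair (xi lam : R) (u : R -> R) : Prop :=
  (forall t : R, ex_derive u t /\ ex_derive (Derive u) t) /\
  (forall t : R, 0 <= t ->
      - Derive (Derive u) t + (xi + t) ^ 2 * u t = lam * u t) /\
  Derive u 0 = 0 /\
  ex_RInt_gen (fun t => (u t) ^ 2) (at_point 0) (Rbar_locally p_infty) /\
  (exists t : R, 0 <= t /\ u t <> 0).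

Definition is_deGennes_eigenvalue (xi lam : R) : Prop :=
  exists u : R -> R, deGennes_eigenpair xi lam u.

(* Second eigenvalue mu_1(xi): the infimum of the eigenvalues that are not
   the lowest one (the spectrum is discrete and simple). *)
Definition mu1 (xi : R) : Rbar :=
  Glb_Rbar (fun lam => is_deGennes_eigenvalue xi lam /\
                       exists lam0, is_deGennes_eigenvalue xi lam0 /\ lam0 < lam).

Definition Theta1 : Rbar :=
  Glb_Rbar (fun x => exists xi : R, mu1 xi = Finite x).

From Stdlib Require Import Reals Lra Classical FunctionalExtensionality.
From Coquelicot Require Import Coquelicot.
Open Scope R_scope.

(* Key tool: the comparison function h(x) = (s + 21/20)^(1/4) exp (- s^2 / 2), s = xi + x,
   satisfies h'' <= (s^2 - lam) h on s > -101/100 as soon as lam < 51/50.  Let u be an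
   eigenfunction for such a lam; its roots are simple (Gronwall on u^2 + u'^2).  A root z with
   s <= -101/100 is impossible: there s^2 >= lam, so u u' increases from its Neumann value 0
   and u(0) = u'(0) = 0.  At a root z with s > -101/100 where u rises, the Wronskian
   h u' - h' u is positive and nondecreasing while u >= 0; this first keeps u positive and
   then contradicts the decay of u at infinity.  So u has constant sign, and the Wronskian of
   two positive eigenfunctions with eigenvalues l0 < l1 is strictly decreasing from its
   Neumann value 0, again contradicting decay.  Hence any eigenvalue above another is
   >= 51/50, so mu_1(xi) >= 51/50 for all xi and Theta_1 >= 51/50 > 1. *)

(* [auto_derive] states derivatives of eta-expanded functions [fun x => f x]. *)
Ltac eta_contract :=
  repeat match goal with |- context [fun x => ?f x] => change (fun x => f x) with f end.

Lemma MVT_interval (f df : R -> R) (a b : R) : a <= b ->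
  (forall x, a <= x <= b -> is_derive f x (df x)) ->
  exists c, a <= c <= b /\ f b - f a = df c * (b - a).
Proof.
  intros Hab Hd.
  destruct (MVT_gen f a b df) as [c [Hc Heq]]; cbv zeta in *;
    rewrite ?Rmin_left, ?Rmax_right in * by lra.
  - intros x Hx; apply Hd; lra.
  - intros x Hx; apply continuity_pt_filterlim, (ex_derive_continuous f).
    exists (df x); apply Hd; lra.
  - exists c; auto.
Qed.

Lemma incr_of_derive_nonneg (f df : R -> R) (a b : R) : a <= b ->
  (forall x, a <= x <= b -> is_derive f x (df x)) ->
  (forall x, a <= x <= b -> 0 <= df x) -> f a <= f b.
Proof.
  intros Hab Hd Hpos; destruct (MVT_interval f df a b Hab Hd) as [c [Hc Heq]].
  specialize (Hpos c Hc); nra.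
Qed.

Lemma strict_incr_of_derive_pos (f df : R -> R) (a b : R) : a < b ->
  (forall x, a <= x <= b -> is_derive f x (df x)) ->
  (forall x, a <= x <= b -> 0 < df x) -> f a < f b.
Proof.
  intros Hab Hd Hpos; destruct (MVT_interval f df a b (Rlt_le _ _ Hab) Hd) as [c [Hc Heq]].
  specialize (Hpos c Hc); nra.
Qed.

Lemma continuous_pos_near (f : R -> R) (z : R) : continuous f z -> 0 < f z ->
  exists d, 0 < d /\ forall y, Rabs (y - z) < d -> 0 < f y.
Proof.
  intros Hc Hz.
  assert (Hhalf : 0 < f z / 2) by lra.
  destruct (Hc _ (locally_ball (f z) (mkposreal _ Hhalf))) as [d Hd].
  exists d; split; [apply cond_pos|].
  intros y Hy; specialize (Hd y Hy).
  unfold ball in Hd; simpl in Hd; unfold AbsRing_ball, abs, minus, plus, opp in Hd; simpl in Hd.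
  apply Rabs_def2 in Hd; lra.
Qed.

Lemma continuous_neg_near (f : R -> R) (z : R) : continuous f z -> f z < 0 ->
  exists d, 0 < d /\ forall y, Rabs (y - z) < d -> f y < 0.
Proof.
  intros Hc Hz.
  destruct (continuous_pos_near (fun x => - f x) z) as [d [Hd Hnear]].
  - apply (continuous_opp f); auto.
  - lra.
  - exists d; split; auto; intros y Hy; specialize (Hnear y Hy); lra.
Qed.

Lemma first_root (f : R -> R) (a b : R) : (forall x, continuous f x) ->
  a < b -> 0 < f a -> f b <= 0 ->
  exists e, a < e <= b /\ f e = 0 /\ forall y, a <= y < e -> 0 < f y.
Proof.
  intros Hc Hab Ha Hb.
  set (E := fun x => a <= x <= b /\ forall y, a <= y <= x -> 0 < f y).
  assert (HEa : E a) by (split; [lra | intros y Hy; replace y with a by lra; auto]).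
  destruct (completeness E) as [e [Hub Hleast]].
  { exists b; intros x Hx; apply Hx. }
  { exists a; auto. }
  assert (Hae : a <= e) by (apply Hub; auto).
  assert (Heb : e <= b) by (apply Hleast; intros x Hx; apply Hx).
  assert (Hbefore : forall y, a <= y < e -> 0 < f y).
  { intros y Hy; apply NNPP; intro Hfy.
    enough (e <= y) by lra.
    apply Hleast; intros x [Hx Hxpos].
    destruct (Rle_lt_dec x y); auto.
    exfalso; apply Hfy, Hxpos; lra. }
  destruct (Rtotal_order (f e) 0) as [Hneg | [Hzero | Hpos]].
  - exfalso.
    destruct (continuous_neg_near f e (Hc e) Hneg) as [d [Hd Hnear]].
    assert (Hea : a < e) by (destruct (Req_dec a e); [subst; lra | lra]).
    set (y := Rmax a (e - d / 2)).
    assert (Hy : a <= y < e) by (split; [apply Rmax_l | apply Rmax_lub_lt; lra]).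
    specialize (Hbefore y Hy).
    enough (f y < 0) by lra.
    apply Hnear; unfold y, Rmax; destruct Rle_dec; apply Rabs_def1; lra.
  - exists e; repeat split; auto.
    destruct (Req_dec a e); [subst; lra | lra].
  - exfalso.
    destruct (continuous_pos_near f e (Hc e) Hpos) as [d [Hd Hnear]].
    assert (Hlt : e < b) by (destruct (Req_dec e b); [subst; lra | lra]).
    set (x := Rmin b (e + d / 2)).
    assert (Hx : e < x <= b) by (split; [apply Rmin_glb_lt; lra | apply Rmin_l]).
    enough (E x) by (assert (x <= e) by (apply Hub; auto); lra).
    split; [lra|]; intros y Hy.
    destruct (Rlt_le_dec y e); [apply Hbefore; lra|].
    apply Hnear; unfold x, Rmin in *; destruct Rle_dec; apply Rabs_def1; lra.
Qed.

Lemma gronwall_vanish (G dG : R -> R) (K a b t0 : R) :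
  (forall x, a <= x <= b -> is_derive G x (dG x)) ->
  (forall x, a <= x <= b -> Rabs (dG x) <= K * G x) ->
  (forall x, a <= x <= b -> 0 <= G x) ->
  a <= t0 <= b -> G t0 = 0 -> forall t, a <= t <= b -> G t = 0.
Proof.
  intros HG Hbound Hpos Ht0 HG0 t Ht.
  enough (G t <= 0) by (specialize (Hpos t Ht); lra).
  assert (Hslope : forall x, a <= x <= b -> - (K * G x) <= dG x <= K * G x).
  { intros x Hx; specialize (Hbound x Hx).
    assert (Hle1 := Rle_abs (dG x)); assert (Hle2 := Rle_abs (- dG x)).
    rewrite Rabs_Ropp in Hle2; lra. }
  (* [G x * exp (- K x)] is nonincreasing after [t0], [G x * exp (K x)] nondecreasing before *)
  destruct (Rle_lt_dec t0 t) as [Hle | Hlt].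
  - assert (Hm : - (G t0 * exp (- (K * t0))) <= - (G t * exp (- (K * t)))).
    { apply (incr_of_derive_nonneg (fun x => - (G x * exp (- (K * x))))
               (fun x => exp (- (K * x)) * (K * G x - dG x))); auto; intros x Hx.
      - auto_derive; [exists (dG x); apply HG; lra|]; eta_contract.
        rewrite (is_derive_unique G x (dG x)) by (apply HG; lra); ring.
      - apply Rmult_le_pos; [apply Rlt_le, exp_pos|].
        specialize (Hslope x ltac:(lra)); lra. }
    rewrite HG0 in Hm; assert (0 < exp (- (K * t))) by apply exp_pos; nra.
  - assert (Hm : G t * exp (K * t) <= G t0 * exp (K * t0)).
    { apply (incr_of_derive_nonneg (fun x => G x * exp (K * x))
               (fun x => exp (K * x) * (K * G x + dG x))); try lra; intros x Hx.
      - auto_derive; [exists (dG x); apply HG; lra|]; eta_contract.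
        rewrite (is_derive_unique G x (dG x)) by (apply HG; lra); ring.
      - apply Rmult_le_pos; [apply Rlt_le, exp_pos|].
        specialize (Hslope x ltac:(lra)); lra. }
    rewrite HG0 in Hm; assert (0 < exp (K * t)) by apply exp_pos; nra.
Qed.

Lemma not_ex_RInt_gen_bounded_below (f : R -> R) (m T : R) : 0 < m ->
  (forall x, T <= x -> m <= f x) ->
  ~ ex_RInt_gen f (at_point 0) (Rbar_locally p_infty).
Proof.
  intros Hm Hf [l Hl].
  (* partial integrals stay within 1 of [l], yet the integral over [b1, b2] is at least 3 *)
  destruct (Hl _ (locally_ball l (mkposreal _ Rlt_0_1))) as [Q P HQ [M HP] Hint].
  set (b1 := Rmax (Rmax M T) 0 + 1).
  set (b2 := b1 + 3 / m).
  assert (Hb1 : M < b1 /\ T < b1 /\ 0 < b1)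
    by (unfold b1; repeat (unfold Rmax; destruct Rle_dec); lra).
  assert (Hb2 : (b2 - b1) * m = 3) by (unfold b2; field; lra).
  assert (Hb12 : b1 < b2) by (assert (0 < 3 / m) by (apply Rdiv_lt_0_compat; lra); unfold b2; lra).
  destruct (Hint 0 b1 HQ (HP b1 ltac:(lra))) as [y1 [Hy1 Hball1]].
  destruct (Hint 0 b2 HQ (HP b2 ltac:(lra))) as [y2 [Hy2 Hball2]].
  simpl in Hy1, Hy2.
  unfold ball in Hball1, Hball2; simpl in Hball1, Hball2.
  unfold AbsRing_ball, abs, minus, plus, opp in Hball1, Hball2; simpl in Hball1, Hball2.
  apply Rabs_def2 in Hball1; apply Rabs_def2 in Hball2.
  assert (E1 : ex_RInt f 0 b1) by (exists y1; auto).
  assert (E12 : ex_RInt f b1 b2) by (apply (ex_RInt_Chasles_2 f 0); [lra | exists y2; auto]).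
  assert (Hsplit := RInt_Chasles f 0 b1 b2 E1 E12).
  rewrite (is_RInt_unique f 0 b1 y1 Hy1), (is_RInt_unique f 0 b2 y2 Hy2) in Hsplit.
  assert (Hle : RInt (fun _ => m) b1 b2 <= RInt f b1 b2).
  { apply RInt_le; [lra | apply ex_RInt_const | auto | intros x Hx; apply Hf; lra]. }
  rewrite RInt_const in Hle; unfold scal in Hle; simpl in Hle; unfold mult in Hle; simpl in Hle.
  unfold plus in Hsplit; simpl in Hsplit.
  lra.
Qed.

Lemma sq_integrable_not_bounded_below (f : R -> R) (c M T : R) :
  ex_RInt_gen (fun t => f t ^ 2) (at_point 0) (Rbar_locally p_infty) ->
  0 < c -> ~ (forall t, T <= t -> c <= M * f t).
Proof.
  intros Hint Hc Hbelow.
  apply (not_ex_RInt_gen_bounded_below (fun t => f t ^ 2) (c ^ 2 / (M ^ 2 + 1)) T); auto.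
  - apply Rdiv_lt_0_compat; nra.
  - intros t Ht; specialize (Hbelow t Ht).
    apply Rmult_le_reg_r with (M ^ 2 + 1); [nra|].
    unfold Rdiv; rewrite Rmult_assoc, Rinv_l by nra; nra.
Qed.

Lemma sign_change_at_root (f : R -> R) (z : R) :
  (forall x, ex_derive f x) -> continuous (Derive f) z -> f z = 0 -> 0 < Derive f z ->
  exists d, 0 < d /\ (forall y, z < y < z + d -> 0 < f y) /\
                     (forall y, z - d < y < z -> f y < 0).
Proof.
  intros Hd Hc Hz Hslope.
  destruct (continuous_pos_near _ _ Hc Hslope) as [d [Hd0 Hnear]].
  assert (Hincr : forall a b, z - d < a < b -> b < z + d -> f a < f b).
  { intros a b Ha Hb; apply (strict_incr_of_derive_pos f (Derive f)); try lra.
    - intros x Hx; apply Derive_correct, Hd.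
    - intros x Hx; apply Hnear, Rabs_def1; lra. }
  exists d; repeat split; auto; intros y Hy; rewrite <- Hz;
    apply Hincr; lra.
Qed.

Definition wronskian (f df g dg : R -> R) (t : R) : R := f t * dg t - df t * g t.

Lemma is_derive_wronskian (f df ddf g dg ddg : R -> R) (x : R) :
  is_derive f x (df x) -> is_derive df x (ddf x) ->
  is_derive g x (dg x) -> is_derive dg x (ddg x) ->
  is_derive (wronskian f df g dg) x (f x * ddg x - ddf x * g x).
Proof.
  intros Hf Hdf Hg Hdg; unfold wronskian.
  auto_derive; [repeat split; eexists; eauto|]; eta_contract.
  rewrite (is_derive_unique _ _ _ Hf), (is_derive_unique _ _ _ Hdf),
    (is_derive_unique _ _ _ Hg), (is_derive_unique _ _ _ Hdg); ring.
Qed.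

Lemma Rabs_double_mul_le (a b c K : R) : Rabs c <= K -> Rabs (2 * a * b * c) <= K * (a ^ 2 + b ^ 2).
Proof.
  intros Hc.
  rewrite !Rabs_mult, (Rabs_right 2) by lra.
  assert (Ha := Rabs_pos a); assert (Hb := Rabs_pos b); assert (Hc0 := Rabs_pos c).
  rewrite <- (pow2_abs a), <- (pow2_abs b).
  assert (2 * Rabs a * Rabs b <= Rabs a ^ 2 + Rabs b ^ 2)
    by (assert (0 <= (Rabs a - Rabs b) ^ 2) by apply pow2_ge_0; nra).
  nra.
Qed.

Definition comp_fun (xi x : R) : R := exp (1/4 * ln (xi + x + 21/20) - (xi + x) ^ 2 / 2).
Definition comp_logder (xi x : R) : R := 1/4 / (xi + x + 21/20) - (xi + x).
Definition comp_fun' (xi x : R) : R := comp_fun xi x * comp_logder xi x.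
Definition comp_fun'' (xi x : R) : R :=
  comp_fun xi x * (comp_logder xi x ^ 2 - 1/4 / (xi + x + 21/20) ^ 2 - 1).

Lemma comp_fun_pos xi x : 0 < comp_fun xi x.
Proof. apply exp_pos. Qed.

Ltac fold_comp_fun xi x :=
  match goal with |- context [exp ?a] =>
    replace (exp a) with (comp_fun xi x) by (unfold comp_fun; f_equal; field) end.

Lemma is_derive_comp_fun xi x : -21/20 < xi + x -> is_derive (comp_fun xi) x (comp_fun' xi x).
Proof.
  intros Hs; unfold comp_fun', comp_logder; unfold comp_fun at 1.
  auto_derive; [lra|]; fold_comp_fun xi x; field; lra.
Qed.

Lemma is_derive_comp_fun' xi x : -21/20 < xi + x -> is_derive (comp_fun' xi) x (comp_fun'' xi x).
Proof.
  intros Hs; unfold comp_fun'', comp_fun', comp_logder; unfold comp_fun at 1.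
  auto_derive; [lra|]; fold_comp_fun xi x; field; lra.
Qed.

Lemma comp_fun_supersolution xi lam x : -101/100 < xi + x -> lam < 51/50 ->
  comp_fun'' xi x <= ((xi + x) ^ 2 - lam) * comp_fun xi x.
Proof.
  intros Hs Hlam; unfold comp_fun'', comp_logder.
  assert (Hh := comp_fun_pos xi x).
  set (s := xi + x) in *; set (y := s + 21/20).
  assert (Hy : 0 < y) by (unfold y; lra).
  (* times [y ^ 2], the gap is a quadratic in [y] with negative discriminant *)
  assert (Hgap : 0 <= (s ^ 2 - lam) - ((1/4 / y - s) ^ 2 - 1/4 / y ^ 2 - 1)).
  { replace ((s ^ 2 - lam) - ((1/4 / y - s) ^ 2 - 1/4 / y ^ 2 - 1))
      with (((1 - lam) * y ^ 2 + 3/16 + s * y / 2) / y ^ 2) by (unfold y; field; lra).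
    apply Rdiv_le_0_compat; [|nra].
    assert (0 <= (51/50 - lam) * y ^ 2) by (apply Rmult_le_pos; nra).
    assert (0 <= (y - 35/64) ^ 2) by apply pow2_ge_0.
    unfold y in *; nra. }
  nra.
Qed.

Lemma comp_fun_tail xi x : 2 <= xi + x -> comp_fun' xi x <= 0 /\ 0 <= comp_fun'' xi x.
Proof.
  intros Hs; unfold comp_fun', comp_fun'', comp_logder.
  assert (Hh := comp_fun_pos xi x).
  set (s := xi + x) in *.
  set (w := / (s + 21/20)).
  assert (Hw : 0 < w <= 1/3).
  { unfold w; split; [apply Rinv_0_lt_compat; lra|].
    replace (1/3) with (/ 3) by field; apply Rinv_le_contravar; lra. }
  replace (1/4 / (s + 21/20)) with (w / 4) by (unfold w; field; lra).
  replace (1/4 / (s + 21/20) ^ 2) with (w ^ 2 / 4) by (unfold w; field; lra).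
  split.
  - assert (w / 4 - s < 0) by lra; nra.
  - apply Rmult_le_pos; [lra | nra].
Qed.

Definition comp_wronskian (xi : R) (u : R -> R) : R -> R :=
  wronskian (comp_fun xi) (comp_fun' xi) u (Derive u).

Section Eigenfunction.

Variables (xi lam : R) (u : R -> R).
Hypothesis Hu : deGennes_eigenpair xi lam u.

Lemma eig_ex_derive t : ex_derive u t /\ ex_derive (Derive u) t.
Proof. apply Hu. Qed.

Lemma eig_ode t : 0 <= t -> Derive (Derive u) t = ((xi + t) ^ 2 - lam) * u t.
Proof. intros Ht; destruct Hu as [_ [Hode _]]; specialize (Hode t Ht); lra. Qed.

Lemma eig_is_derive t : is_derive u t (Derive u t).
Proof. apply Derive_correct, eig_ex_derive. Qed.

Lemma eig_is_derive_Derive t : 0 <= t -> is_derive (Derive u) t (((xi + t) ^ 2 - lam) * u t).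
Proof. intros Ht; rewrite <- eig_ode by auto; apply Derive_correct, eig_ex_derive. Qed.

Lemma eig_continuous t : continuous u t.
Proof. apply (ex_derive_continuous u), eig_ex_derive. Qed.

Lemma eig_continuous_Derive t : continuous (Derive u) t.
Proof. apply (ex_derive_continuous (Derive u)), eig_ex_derive. Qed.

Ltac eig_derive :=
  auto_derive; [repeat split; apply eig_ex_derive|]; eta_contract;
  try (rewrite eig_ode by lra); ring.

Lemma eig_is_derive_sq x : is_derive (fun t => u t ^ 2) x (2 * (u x * Derive u x)).
Proof. eig_derive. Qed.

Lemma eig_is_derive_mul_Derive x : 0 <= x ->
  is_derive (fun t => u t * Derive u t) x (Derive u x ^ 2 + ((xi + x) ^ 2 - lam) * u x ^ 2).
Proof. intros; eig_derive. Qed.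

Lemma eig_is_derive_energy x : 0 <= x ->
  is_derive (fun t => u t ^ 2 + Derive u t ^ 2) x
    (2 * u x * Derive u x * (1 + ((xi + x) ^ 2 - lam))).
Proof. intros; eig_derive. Qed.

Lemma eig_Cauchy_zero t0 : 0 <= t0 -> u t0 = 0 -> Derive u t0 = 0 ->
  forall t, 0 <= t -> u t = 0.
Proof.
  intros Ht0 Hu0 Hdu0 t Ht.
  set (b := Rmax t t0).
  assert (Htb : t <= b) by apply Rmax_l; assert (Ht0b : t0 <= b) by apply Rmax_r.
  enough (Henergy : u t ^ 2 + Derive u t ^ 2 = 0) by nra.
  apply (gronwall_vanish (fun t => u t ^ 2 + Derive u t ^ 2)
           (fun x => 2 * u x * Derive u x * (1 + ((xi + x) ^ 2 - lam)))
           (1 + (Rabs xi + b) ^ 2 + Rabs lam) 0 b t0); try lra.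
  - intros x Hx; apply eig_is_derive_energy; lra.
  - intros x Hx; apply Rabs_double_mul_le.
    assert (Hs : Rabs (xi + x) <= Rabs xi + b)
      by (eapply Rle_trans; [apply Rabs_triang | rewrite (Rabs_right x) by lra; lra]).
    assert (Hq : (xi + x) ^ 2 <= (Rabs xi + b) ^ 2)
      by (apply pow_maj_Rabs; auto).
    eapply Rle_trans; [apply Rabs_triang|]; rewrite Rabs_R1.
    eapply Rle_trans; [apply Rplus_le_compat_l, Rabs_triang|].
    rewrite Rabs_Ropp, (Rabs_right ((xi + x) ^ 2)) by (apply Rle_ge, pow2_ge_0); lra.
  - intros x Hx; nra.
  - rewrite Hu0, Hdu0; ring.
Qed.

Lemma eig_root_simple t0 : 0 <= t0 -> u t0 = 0 -> Derive u t0 <> 0.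
Proof.
  intros Ht0 Hu0 Hdu0.
  destruct Hu as [_ [_ [_ [_ [t [Ht Hne]]]]]].
  exact (Hne (eig_Cauchy_zero t0 Ht0 Hu0 Hdu0 t Ht)).
Qed.

Lemma eig_not_bounded_below c M T : 0 < c -> ~ (forall t, T <= t -> c <= M * u t).
Proof. apply sq_integrable_not_bounded_below, Hu. Qed.

Lemma eig_tail_Derive T : 0 <= T -> (forall t, T <= t -> lam <= (xi + t) ^ 2) ->
  (forall t, T <= t -> 0 < u t) -> forall t, T <= t -> Derive u T <= Derive u t <= 0.
Proof.
  intros HT Hq Hpos.
  assert (Hconvex : forall a b, T <= a <= b -> Derive u a <= Derive u b).
  { intros a b Hab; apply (incr_of_derive_nonneg _ (fun x => ((xi + x) ^ 2 - lam) * u x)).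
    - lra.
    - intros x Hx; apply eig_is_derive_Derive; lra.
    - intros x Hx; specialize (Hq x ltac:(lra)); specialize (Hpos x ltac:(lra)); nra. }
  intros t Ht; split; [apply Hconvex; lra|].
  (* a positive slope would persist and keep [u] above [u t] *)
  apply Rnot_lt_le; intros Hslope.
  apply (eig_not_bounded_below (u t) 1 t); [apply Hpos; lra|].
  intros s Hs; rewrite Rmult_1_l.
  apply (incr_of_derive_nonneg u (Derive u)); auto.
  - intros x _; apply eig_is_derive.
  - intros x Hx; assert (Derive u t <= Derive u x) by (apply Hconvex; lra); lra.
Qed.

Lemma eig_pos_of_rootless : (forall t, 0 <= t -> u t <> 0) -> 0 < u 0 ->
  forall t, 0 <= t -> 0 < u t.
Proof.
  intros Hroot Hu0 t Ht.
  apply Rnot_le_lt; intros Hneg.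
  destruct (Req_dec t 0) as [-> | Ht0]; [lra|].
  destruct (first_root u 0 t eig_continuous) as [e [He [Hue _]]]; try lra.
  apply (Hroot e); lra.
Qed.

Lemma eig_no_root_forbidden t : 0 <= t ->
  (forall x, 0 <= x <= t -> lam <= (xi + x) ^ 2) -> u t <> 0.
Proof.
  intros Ht Hq Hut.
  assert (Hflux : forall x, 0 <= x <= t -> 0 <= u x * Derive u x).
  { intros x Hx.
    replace 0 with (u 0 * Derive u 0) by (destruct Hu as [_ [_ [-> _]]]; ring).
    apply (incr_of_derive_nonneg (fun x => u x * Derive u x)
             (fun x => Derive u x ^ 2 + ((xi + x) ^ 2 - lam) * u x ^ 2) 0 x); try lra.
    - intros y Hy; apply eig_is_derive_mul_Derive; lra.
    - intros y Hy; specialize (Hq y ltac:(lra)); nra. }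
  assert (Hsq : u 0 ^ 2 <= u t ^ 2).
  { apply (incr_of_derive_nonneg (fun x => u x ^ 2) (fun x => 2 * (u x * Derive u x)) 0 t Ht);
      [intros; apply eig_is_derive_sq | intros y Hy; specialize (Hflux y Hy); lra]. }
  rewrite Hut in Hsq.
  apply (eig_root_simple 0 (Rle_refl 0)); [nra|].
  destruct Hu as [_ [_ [Hneumann _]]]; exact Hneumann.
Qed.

Section BelowThreshold.

Hypothesis Hlam : lam < 51/50.

Lemma comp_wronskian_incr z e : 0 <= z -> -101/100 < xi + z -> z <= e ->
  (forall x, z <= x <= e -> 0 <= u x) ->
  comp_wronskian xi u z <= comp_wronskian xi u e.
Proof.
  intros Hz Hs Hze Hnonneg.
  apply (incr_of_derive_nonneg (comp_wronskian xi u)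
           (fun x => comp_fun xi x * (((xi + x) ^ 2 - lam) * u x) - comp_fun'' xi x * u x));
    auto; intros x Hx.
  - apply (is_derive_wronskian _ _ (comp_fun'' xi) _ _ (fun x => ((xi + x) ^ 2 - lam) * u x));
      [apply is_derive_comp_fun | apply is_derive_comp_fun'
      | apply eig_is_derive | apply eig_is_derive_Derive]; lra.
  - assert (Hsup := comp_fun_supersolution xi lam x ltac:(lra) Hlam).
    specialize (Hnonneg x Hx); nra.
Qed.

Lemma eig_pos_after_rising_root z : 0 <= z -> -101/100 < xi + z ->
  u z = 0 -> 0 < Derive u z -> forall y, z < y -> 0 < u y.
Proof.
  intros Hz Hs Huz Hslope y Hy.
  destruct (sign_change_at_root u z (fun x => proj1 (eig_ex_derive x))
              (eig_continuous_Derive z) Huz Hslope) as [d [Hd [Hafter _]]].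
  remember (z + d / 2) as a eqn:Ha.
  destruct (Rle_lt_dec y a) as [Hya | Hay]; [apply Hafter; lra|].
  apply Rnot_le_lt; intros Hle.
  destruct (first_root u a y eig_continuous) as [e [He [Hue Hbefore]]];
    [lra | apply Hafter; lra | auto |].
  (* The Wronskian, positive at [z], increases up to the first root [e], where it
     reduces to [comp_fun xi e * Derive u e]; so [u] would cross zero upwards at [e]. *)
  assert (HW : comp_wronskian xi u z <= comp_wronskian xi u e).
  { apply comp_wronskian_incr; [lra | lra | lra|]; intros x Hx.
    destruct (Req_dec x z) as [-> | Hxz]; [lra|].
    destruct (Rlt_le_dec x a); [apply Rlt_le, Hafter; lra|].
    destruct (Req_dec x e) as [-> | Hxe]; [lra|].
    apply Rlt_le, Hbefore; lra. }
  assert (Hslope_e : 0 < Derive u e).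
  { unfold comp_wronskian, wronskian in HW; rewrite Huz, Hue in HW.
    assert (Hz0 := comp_fun_pos xi z); assert (He0 := comp_fun_pos xi e); nra. }
  destruct (sign_change_at_root u e (fun x => proj1 (eig_ex_derive x))
              (eig_continuous_Derive e) Hue Hslope_e) as [d' [Hd' [_ Hneg]]].
  set (y' := Rmax a (e - d' / 2)).
  assert (Hy' : a <= y' < e) by (split; [apply Rmax_l | apply Rmax_lub_lt; lra]).
  specialize (Hbefore y' Hy').
  enough (u y' < 0) by lra.
  apply Hneg; split; [|lra].
  enough (e - d' / 2 <= y') by lra; apply Rmax_r.
Qed.

Lemma eig_no_rising_root z : 0 <= z -> -101/100 < xi + z ->
  u z = 0 -> 0 < Derive u z -> False.
Proof.
  intros Hz Hs Huz Hslope.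
  assert (Hpos := eig_pos_after_rising_root z Hz Hs Huz Hslope).
  set (W := comp_wronskian xi u).
  assert (HWz : 0 < W z)
    by (unfold W, comp_wronskian, wronskian; rewrite Huz; assert (Hh := comp_fun_pos xi z); nra).
  set (T := Rmax (z + 1) (2 - xi)).
  assert (HTz : z + 1 <= T) by apply Rmax_l; assert (HTs : 2 - xi <= T) by apply Rmax_r.
  assert (Hdu := eig_tail_Derive T ltac:(lra) ltac:(intros t Ht; nra)
                   ltac:(intros t Ht; apply Hpos; lra)).
  apply (eig_not_bounded_below (W z) (- comp_fun' xi T) T HWz).
  intros t Ht.
  assert (HWt : W z <= W t).
  { apply comp_wronskian_incr; [lra | lra | lra|]; intros x Hx.
    destruct (Req_dec x z) as [-> | Hxz]; [lra | apply Rlt_le, Hpos; lra]. }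
  assert (Hslope_cmp : comp_fun' xi T <= comp_fun' xi t).
  { apply (incr_of_derive_nonneg (comp_fun' xi) (comp_fun'' xi)); auto; intros x Hx.
    - apply is_derive_comp_fun'; lra.
    - apply comp_fun_tail; lra. }
  destruct (Hdu t Ht) as [_ Hdut].
  assert (Hut := Hpos t ltac:(lra)); assert (Hh := comp_fun_pos xi t).
  assert (comp_fun xi t * Derive u t <= 0) by nra.
  assert ((comp_fun' xi T - comp_fun' xi t) * u t <= 0) by nra.
  enough (W t <= - comp_fun' xi T * u t) by lra.
  unfold W, comp_wronskian, wronskian; lra.
Qed.

End BelowThreshold.

End Eigenfunction.

Lemma eig_opp xi lam u : deGennes_eigenpair xi lam u -> deGennes_eigenpair xi lam (fun t => - u t).
Proof.
  intros Hu.
  assert (HD : forall x, Derive (fun t => - u t) x = - Derive u x) by (intro; apply Derive_opp).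
  assert (HD2 : forall x, Derive (Derive (fun t => - u t)) x = - Derive (Derive u) x).
  { intro x; rewrite (Derive_ext _ (fun t => - Derive u t)) by apply HD; apply Derive_opp. }
  destruct Hu as [Hd [Hode [Hneumann [Hint [t0 [Ht0 Hne]]]]]].
  split; [|split; [|split; [|split]]].
  - intro t; split.
    + apply (ex_derive_opp u), Hd.
    + apply (ex_derive_ext (fun t => - Derive u t)); [intro; symmetry; apply HD|].
      apply (ex_derive_opp (Derive u)), Hd.
  - intros t Ht; rewrite HD2; specialize (Hode t Ht); lra.
  - rewrite HD, Hneumann; lra.
  - replace (fun t => (- u t) ^ 2) with (fun t => u t ^ 2)
      by (apply functional_extensionality; intro; ring); exact Hint.
  - exists t0; split; auto; lra.
Qed.

Lemma eig_rootless_positive xi lam u : deGennes_eigenpair xi lam u ->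
  (forall t, 0 <= t -> u t <> 0) ->
  exists v, deGennes_eigenpair xi lam v /\ forall t, 0 <= t -> 0 < v t.
Proof.
  intros Hu Hroot.
  destruct (Rtotal_order (u 0) 0) as [Hneg | [Hzero | Hpos]].
  - exists (fun t => - u t); split; [apply eig_opp, Hu|].
    apply (eig_pos_of_rootless xi lam); [apply eig_opp, Hu | | lra].
    intros t Ht Hz; apply (Hroot t Ht); lra.
  - exfalso; exact (Hroot 0 (Rle_refl 0) Hzero).
  - exists u; split; auto; apply (eig_pos_of_rootless xi lam); auto.
Qed.

Lemma eig_no_root xi lam u : deGennes_eigenpair xi lam u -> lam < 51/50 ->
  forall t, 0 <= t -> u t <> 0.
Proof.
  intros Hu Hlam t Ht Hut.
  destruct (Rle_lt_dec (xi + t) (-101/100)) as [Hleft | Hright].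
  - apply (eig_no_root_forbidden xi lam u Hu t Ht); auto.
    intros x Hx; nra.
  - assert (Hslope := eig_root_simple xi lam u Hu t Ht Hut).
    destruct (Rtotal_order (Derive u t) 0) as [Hneg | [Hzero | Hpos]].
    + apply (eig_no_rising_root xi lam (fun s => - u s) (eig_opp _ _ _ Hu) Hlam t Ht Hright).
      * lra.
      * rewrite Derive_opp; lra.
    + exact (Hslope Hzero).
    + exact (eig_no_rising_root xi lam u Hu Hlam t Ht Hright Hut Hpos).
Qed.

Lemma positive_eigs_wronskian_neg xi l0 l1 u0 u1 :
  deGennes_eigenpair xi l0 u0 -> deGennes_eigenpair xi l1 u1 -> l0 < l1 ->
  (forall t, 0 <= t -> 0 < u0 t) -> (forall t, 0 <= t -> 0 < u1 t) ->
  let W := wronskian u0 (Derive u0) u1 (Derive u1) in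
  W 1 < 0 /\ forall t, 1 <= t -> W t <= W 1.
Proof.
  intros Hu0 Hu1 Hl Hpos0 Hpos1 W.
  assert (HW : forall x, 0 <= x -> is_derive (fun t => - W t) x ((l1 - l0) * u0 x * u1 x)).
  { intros x Hx.
    replace ((l1 - l0) * u0 x * u1 x)
      with (- (u0 x * (((xi + x) ^ 2 - l1) * u1 x) - ((xi + x) ^ 2 - l0) * u0 x * u1 x))
      by ring.
    apply (is_derive_opp W).
    apply (is_derive_wronskian _ _ (fun x => ((xi + x) ^ 2 - l0) * u0 x)
             _ _ (fun x => ((xi + x) ^ 2 - l1) * u1 x));
      [apply (eig_is_derive xi l0 u0 Hu0) | apply (eig_is_derive_Derive xi l0 u0 Hu0), Hx
      |apply (eig_is_derive xi l1 u1 Hu1) | apply (eig_is_derive_Derive xi l1 u1 Hu1), Hx]. }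
  assert (HW0 : W 0 = 0).
  { unfold W, wronskian; destruct Hu0 as [_ [_ [-> _]]]; destruct Hu1 as [_ [_ [-> _]]]; ring. }
  split.
  - enough (- W 0 < - W 1) by lra.
    apply (strict_incr_of_derive_pos (fun t => - W t) (fun x => (l1 - l0) * u0 x * u1 x));
      [lra | intros x Hx; apply HW; lra|].
    intros x Hx; specialize (Hpos0 x ltac:(lra)); specialize (Hpos1 x ltac:(lra)).
    apply Rmult_lt_0_compat; [apply Rmult_lt_0_compat|]; lra.
  - intros t Ht; enough (- W 1 <= - W t) by lra.
    apply (incr_of_derive_nonneg (fun t => - W t) (fun x => (l1 - l0) * u0 x * u1 x));
      [lra | intros x Hx; apply HW; lra|].
    intros x Hx; specialize (Hpos0 x ltac:(lra)); specialize (Hpos1 x ltac:(lra)).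
    apply Rmult_le_pos; [apply Rmult_le_pos|]; lra.
Qed.

Lemma no_two_positive_eigenfunctions xi l0 l1 u0 u1 :
  deGennes_eigenpair xi l0 u0 -> deGennes_eigenpair xi l1 u1 -> l0 < l1 ->
  (forall t, 0 <= t -> 0 < u0 t) -> (forall t, 0 <= t -> 0 < u1 t) -> False.
Proof.
  intros Hu0 Hu1 Hl Hpos0 Hpos1.
  destruct (positive_eigs_wronskian_neg xi l0 l1 u0 u1 Hu0 Hu1 Hl Hpos0 Hpos1)
    as [HW1 HWle]; set (W := wronskian u0 (Derive u0) u1 (Derive u1)) in *.
  set (T := Rmax 1 (Rabs l1 + 1 - xi)).
  assert (HT1 : 1 <= T) by apply Rmax_l; assert (HT2 : Rabs l1 + 1 - xi <= T) by apply Rmax_r.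
  assert (Hq : forall l t, l <= l1 -> T <= t -> l <= (xi + t) ^ 2).
  { intros l t Hl' Ht; assert (Hlabs := Rle_abs l1); assert (Habs := Rabs_pos l1).
    assert (1 <= xi + t) by lra.
    assert (xi + t <= (xi + t) ^ 2) by nra; lra. }
  assert (Hdu0 := eig_tail_Derive xi l0 u0 Hu0 T ltac:(lra) ltac:(intros; apply Hq; lra)
                    ltac:(intros; apply Hpos0; lra)).
  assert (Hdu1 := eig_tail_Derive xi l1 u1 Hu1 T ltac:(lra) ltac:(intros; apply Hq; lra)
                    ltac:(intros; apply Hpos1; lra)).
  (* [- W] stays above [- W 1 > 0], yet is at most [- Derive u1 T * u0] in the tail *)
  apply (eig_not_bounded_below xi l0 u0 Hu0 (- W 1) (- Derive u1 T) T); [lra|].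
  intros t Ht.
  specialize (HWle t ltac:(lra)).
  destruct (Hdu0 t Ht) as [_ Hd0]; destruct (Hdu1 t Ht) as [Hd1 _].
  specialize (Hpos0 t ltac:(lra)); specialize (Hpos1 t ltac:(lra)).
  enough (- W t <= - Derive u1 T * u0 t) by lra.
  assert (Derive u0 t * u1 t <= 0) by nra.
  assert ((Derive u1 T - Derive u1 t) * u0 t <= 0) by nra.
  unfold W, wronskian; lra.
Qed.

Lemma excited_eigenvalue_ge xi l0 l1 :
  is_deGennes_eigenvalue xi l0 -> is_deGennes_eigenvalue xi l1 -> l0 < l1 -> 51/50 <= l1.
Proof.
  intros [u0 Hu0] [u1 Hu1] Hl; apply Rnot_lt_le; intros Hl1.
  destruct (eig_rootless_positive _ _ _ Hu0 (eig_no_root _ _ _ Hu0 ltac:(lra)))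
    as [v0 [Hv0 Hpos0]].
  destruct (eig_rootless_positive _ _ _ Hu1 (eig_no_root _ _ _ Hu1 Hl1))
    as [v1 [Hv1 Hpos1]].
  exact (no_two_positive_eigenfunctions xi l0 l1 v0 v1 Hv0 Hv1 Hl Hpos0 Hpos1).
Qed.

Theorem mainTheorem6 : Rbar_lt (Finite 1) Theta1.
Proof.
  assert (Hmu : forall xi, Rbar_le (Finite (51/50)) (mu1 xi)).
  { intro xi; apply (proj2 (Glb_Rbar_correct _)).
    intros lam [Hlam [lam0 [Hlam0 Hlt]]]; simpl.
    exact (excited_eigenvalue_ge xi lam0 lam Hlam0 Hlam Hlt). }
  apply Rbar_lt_le_trans with (Finite (51/50)); [simpl; lra|].
  apply (proj2 (Glb_Rbar_correct _)).
  intros x [xi Hx]; rewrite <- Hx; apply Hmu.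
Qed.
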